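(* Let $\Phi$ be an automorphism of the category $(Rep\text{-}R)^0$ with $\Phi((W_1,F_1))=(W_1,F_1)$, so that $\Phi$ restricts to a monoid automorphism of $End_1$. Then $$\Phi(T_e)=T_e,\quad \Phi(T_0)=T_0,\quad \Phi(T_x)=T_x,\quad \Phi(\nu_{(0,x)})=\nu_{(0,x)}.$$
   Context: $R$ is a commutative associative ring with unit. A group representation $(A,G,\cdot)$ is a unital $R$-module $A$ with a right action of the group $G$ by $R$-module automorphisms. A homomorphism is a pair $(\mu^{(1)},\mu^{(2)})$ (an $R$-linear map and a group homomorphism) with $\mu^{(1)}(a\cdot g)=\mu^{(1)}(a)\bullet\mu^{(2)}(g)$. A free representation over a pair of sets $(Y,X)$ is $(W,F)$, where $F$ is the free group on $X$ and $W$ is the free right $RF$-module on $Y$, with $F$ acting by right multiplication. $(Rep\text{-}R)^0$ is the category of free representations over pairs $(Y,X)$ of finite subsets of fixed infinite sets $Y_0,X_0$, with all homomorphisms. $(W_1,F_1)$ is the free representation with one module generator and one group generator: $F_1=\langle x\rangle$ is infinite cyclic with identity $e$, and $W_1=RF_1$. $End_1$ is its endomorphism monoid, and $\nu_{(w,g)}$ is the endomorphism with $1\mapsto w$, $x\mapsto g$. Finally, $$T_e=\{\nu_{(w,e)}:w\in W_1\},\quad T_0=\{\nu_{(0,g)}:g\in F_1\},\quad T_x=\{\nu_{(w,x)}:w\in W_1\}.$$ *)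

From HB Require Import structures.
From mathcomp Require Import all_boot all_order all_algebra.
From mathcomp Require Import finmap.
Set Implicit Arguments. Unset Strict Implicit. Unset Printing Implicit Defensive.
Import GRing.Theory.
Local Open Scope fset_scope.
Local Open Scope ring_scope.

Section FreeGroup.
Variable L : finType.

Definition letter := (L * bool)%type.
Definition inv_letter (a : letter) : letter := (a.1, ~~ a.2).

Definition reduced (w : seq letter) : bool :=
  sorted (fun a b => b != inv_letter a) w.

Definition push (a : letter) (w : seq letter) : seq letter :=
  if w is b :: w' then (if b == inv_letter a then w' else a :: w) else [:: a].

Lemma push_reduced a w : reduced w -> reduced (push a w).
Proof.
case: w => [|b w] //= Hw.
case: ifP => Hb.
  by case: w Hw => [|c w] //= /andP[].
by rewrite /reduced /= Hb.
Qed.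

Record fgword := FGW { fgw_val :> seq letter; fgw_red : reduced fgw_val }.

HB.instance Definition _ := [isSub for fgw_val].
HB.instance Definition _ := [Countable of fgword by <:].

Lemma foldr_push_reduced u v : reduced v -> reduced (foldr push v u).
Proof. by elim: u => [|a u IH] //= Hv; apply: push_reduced; apply: IH. Qed.

Lemma nil_reduced : reduced [::]. Proof. by []. Qed.

Definition fg_one : fgword := FGW nil_reduced.
Definition fg_mul (u v : fgword) : fgword :=
  FGW (foldr_push_reduced u (fgw_red v)).
Lemma inv_reduced (u : seq letter) :
  reduced (foldl (fun acc a => push (inv_letter a) acc) [::] u).
Proof.
suff H : forall acc, reduced acc ->
  reduced (foldl (fun acc a => push (inv_letter a) acc) acc u) by exact: H.
by elim: u => [|a u IH] //= acc Hacc; apply: IH; apply: push_reduced.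
Qed.
Definition fg_inv (u : fgword) : fgword := FGW (inv_reduced u).

Lemma gen_reduced (x : L) : reduced [:: (x, true)]. Proof. by []. Qed.
Definition fg_gen (x : L) : fgword := FGW (gen_reduced x).

End FreeGroup.

Definition is_ghom (L L' : finType) (f : fgword L -> fgword L') :=
  forall u v, f (fg_mul u v) = fg_mul (f u) (f v).

Section FreeModule.
Variables (R : comNzRingType) (Y L : finType).

(* elements: finitely supported R-valued functions on Y x F, i.e.
   finite sums  sum_i r_i (y_i . f_i) *)
Definition fmod := {fsfun (Y * fgword L)%type -> R with 0}.

Definition fm_zero : fmod := [fsfun k in fset0 => (0 : R) | 0].
Definition fm_add (a b : fmod) : fmod :=
  [fsfun k in finsupp a `|` finsupp b => a k + b k | 0].
Definition fm_scale (r : R) (a : fmod) : fmod :=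
  [fsfun k in finsupp a => r * a k | 0].
(* right action of g : (y . f) . g = y . (f g) *)
Definition fm_act (a : fmod) (g : fgword L) : fmod :=
  [fsfun k in [fset (k'.1, fg_mul k'.2 g) | k' in finsupp a]
     => a (k.1, fg_mul k.2 (fg_inv g)) | 0].
Definition fm_basis (y : Y) : fmod :=
  [fsfun k in [fset (y, fg_one L)] => (1 : R) | 0].
End FreeModule.

Section Category.
Variables (R : comNzRingType) (Y0 X0 : choiceType).

(* an object is the free representation over a pair (Y, X) of finite
   subsets of Y0, X0 *)
Definition robj := ({fset Y0} * {fset X0})%type.
Definition grp (A : robj) := fgword (A.2 : finType).
Definition md (A : robj) := @fmod R (A.1 : finType) (A.2 : finType).

Record rhom (A B : robj) := Hom {
  mu1 : md A -> md B;
  mu2 : grp A -> grp B;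
  mu1_add : forall a b, mu1 (fm_add a b) = fm_add (mu1 a) (mu1 b);
  mu1_scale : forall r a, mu1 (fm_scale r a) = fm_scale r (mu1 a);
  mu2_ghom : is_ghom mu2;
  mu_act : forall a g, mu1 (fm_act a g) = fm_act (mu1 a) (mu2 g)
}.

Definition hid (A : robj) : rhom A A :=
  @Hom A A id id (fun _ _ => erefl) (fun _ _ => erefl) (fun _ _ => erefl)
    (fun _ _ => erefl).

Definition hcomp (A B C : robj) (g : rhom B C) (f : rhom A B) : rhom A C.
Proof.
refine (@Hom A C (mu1 g \o mu1 f) (mu2 g \o mu2 f) _ _ _ _) => /=.
- by move=> a b; rewrite mu1_add mu1_add.
- by move=> r a; rewrite mu1_scale mu1_scale.
- by move=> u v /=; rewrite (mu2_ghom f u v) (mu2_ghom g).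
- by move=> a u; rewrite mu_act mu_act.
Defined.

Definition is_cat_auto (PO : robj -> robj)
    (PH : forall A B, rhom A B -> rhom (PO A) (PO B)) : Prop :=
  [/\ bijective PO,
      (forall A B, bijective (PH A B)),
      (forall A, PH A A (hid A) = hid (PO A)) &
      (forall A B C (g : rhom B C) (f : rhom A B),
          PH A C (hcomp g f) = hcomp (PH B C g) (PH A B f))].

(* (W_1, F_1): the free representation over ({y}, {x}) *)
Definition O1 (y : Y0) (x : X0) : robj := ([fset y], [fset x]).
Definition End1 (y : Y0) (x : X0) := rhom (O1 y x) (O1 y x).

(* the module generator 1 of W_1 = R F_1 and the group generator x of F_1 *)
Definition one1 (y : Y0) (x : X0) : md (O1 y x) := fm_basis R _ [` fset11 y].
Definition x1 (y : Y0) (x : X0) : grp (O1 y x) := fg_gen [` fset11 x].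
Definition e1 (y : Y0) (x : X0) : grp (O1 y x) := fg_one _.
Definition zero1 (y : Y0) (x : X0) : md (O1 y x) := fm_zero _ _ _.

(* m = nu_(w,g) : the endomorphism with 1 |-> w, x |-> g *)
Definition is_nu (y : Y0) (x : X0) (w : md (O1 y x)) (g : grp (O1 y x))
  (m : End1 y x) : Prop := mu1 m (one1 y x) = w /\ mu2 m (x1 y x) = g.

Definition T_e (y : Y0) (x : X0) (m : End1 y x) : Prop :=
  exists w, is_nu w (e1 y x) m.
Definition T_0 (y : Y0) (x : X0) (m : End1 y x) : Prop :=
  exists g, is_nu (zero1 y x) g m.
Definition T_x (y : Y0) (x : X0) (m : End1 y x) : Prop :=
  exists w, is_nu w (x1 y x) m.

Definition restr1 (y : Y0) (x : X0) (PO : robj -> robj)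
    (PH : forall A B, rhom A B -> rhom (PO A) (PO B))
    (h : PO (O1 y x) = O1 y x) (m : End1 y x) : End1 y x :=
  eq_rect (PO (O1 y x)) (fun A => rhom A A) (PH _ _ m) (O1 y x) h.
End Category.

Definition image_eq (T : Type) (f : T -> T) (P : T -> Prop) : Prop :=
  forall n, P n <-> exists m, P m /\ f m = n.

Definition infinite_type (T : eqType) : Prop :=
  forall s : seq T, exists t, t \notin s.

From Pilot Require Import Defs.
From HB Require Import structures.
From mathcomp Require Import all_boot all_order all_algebra.
From mathcomp Require Import finmap.
From mathcomp Require Import zify.
From Stdlib Require Import FunctionalExtensionality ProofIrrelevance.
Set Implicit Arguments. Unset Strict Implicit. Unset Printing Implicit Defensive.
Import GRing.Theory.
Local Open Scope fset_scope.
Local Open Scope ring_scope.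

(* Since Phi fixes (W_1,F_1), its restriction psi to End_1 is an automorphism
   of the monoid (End_1, composition).  In this monoid z = nu_(0,e) is the
   zero, and c = nu_(0,x) is singled out algebraically: it is a nonzero
   central idempotent, the only idempotents f with f c = f are z and c, and c
   annihilates no nonzero central element (such an element commutes with the
   shift a |-> a.x of W_1, so its values are shift-invariant, and the only
   finitely supported shift-invariant element of W_1 is 0).  psi (c) has the
   same properties, which forces psi (c) = c.  Finally c m = nu_(0, m(x)),
   so T_e, T_x and T_0 are the sets of m with c m = z, c m = c and c m = m
   respectively, and these sets are preserved by psi. *)

Section FreeGroupLaws.
Variable L : finType.
Implicit Types (u v w : fgword L) (a : letter L) (s t : seq (letter L)).

Lemma inv_letterK : involutive (@inv_letter L).
Proof. by case=> l b; rewrite /inv_letter /= negbK. Qed.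

Lemma reduced_behead a s : reduced (a :: s) -> reduced s.
Proof. by case: s => [|b s] //= /andP[]. Qed.

Lemma push_inv_letter a s : reduced s -> push a (push (inv_letter a) s) = s.
Proof.
case: s => [|b s] /=; first by rewrite eqxx.
rewrite inv_letterK; case: eqP => [->|_] Hs; last by rewrite /= eqxx.
by case: s Hs => [|d s] //= /andP[/negbTE ->].
Qed.

Lemma push_reduced_cons a s : reduced (a :: s) -> push a s = a :: s.
Proof. by case: s => [|b s] //= /andP[/negbTE ->]. Qed.

Lemma foldr_push_id s : reduced s -> foldr (@push L) [::] s = s.
Proof.
elim: s => [|a s IH] //= Hs.
by rewrite IH ?push_reduced_cons // (reduced_behead Hs).
Qed.

Lemma foldr_push_push t s a : reduced t ->
  foldr (@push L) t (push a s) = push a (foldr (@push L) t s).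
Proof.
move=> Ht; case: s => [|b s] //=.
by case: eqP => [->|//]; rewrite push_inv_letter // foldr_push_reduced.
Qed.

Lemma foldr_pushA t q s : reduced t ->
  foldr (@push L) t (foldr (@push L) q s) =
  foldr (@push L) (foldr (@push L) t q) s.
Proof. by move=> Ht; elim: s => [|a s IH] //=; rewrite foldr_push_push // IH. Qed.

Lemma fg_mulA u v w : fg_mul (fg_mul u v) w = fg_mul u (fg_mul v w).
Proof. exact/val_inj/foldr_pushA/fgw_red. Qed.

Lemma fg_mul1g u : fg_mul (fg_one L) u = u.
Proof. exact: val_inj. Qed.

Lemma fg_mulg1 u : fg_mul u (fg_one L) = u.
Proof. exact/val_inj/foldr_push_id/fgw_red. Qed.

Lemma foldl_push_inv acc s :
  foldl (fun acc a => push (inv_letter a) acc) acc s =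
  foldr (@push L) acc (rev (map (@inv_letter L) s)).
Proof.
elim: s acc => [|a s IH] acc //=.
by rewrite IH rev_cons -cats1 foldr_cat.
Qed.

Lemma foldr_push_inv_rev s :
  foldr (@push L) s (rev (map (@inv_letter L) s)) = [::].
Proof.
elim: s => [|a s IH] //=.
by rewrite rev_cons -cats1 foldr_cat /= inv_letterK eqxx.
Qed.

Lemma fg_mulVg u : fg_mul (fg_inv u) u = fg_one L.
Proof.
apply: val_inj; rewrite /= foldl_push_inv (foldr_pushA _ _ (fgw_red u)).
exact: foldr_push_inv_rev.
Qed.

Lemma fg_mulgV u : fg_mul u (fg_inv u) = fg_one L.
Proof.
rewrite -[fg_mul u _]fg_mul1g -(fg_mulVg (fg_inv u)) fg_mulA.
by rewrite -(fg_mulA (fg_inv u)) fg_mulVg fg_mul1g.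
Qed.

Lemma fg_mulgKV u v : fg_mul (fg_mul u (fg_inv v)) v = u.
Proof. by rewrite fg_mulA fg_mulVg fg_mulg1. Qed.

Lemma fg_mulgK u v : fg_mul (fg_mul u v) (fg_inv v) = u.
Proof. by rewrite fg_mulA fg_mulgV fg_mulg1. Qed.

Lemma fg_invg1 : fg_inv (fg_one L) = fg_one L.
Proof. exact: val_inj. Qed.

Lemma fg_invMg u v : fg_inv (fg_mul u v) = fg_mul (fg_inv v) (fg_inv u).
Proof.
have H : fg_mul (fg_mul (fg_inv v) (fg_inv u)) (fg_mul u v) = fg_one L.
  by rewrite fg_mulA -(fg_mulA (fg_inv u)) fg_mulVg fg_mul1g fg_mulVg.
by rewrite -[fg_inv _]fg_mul1g -H fg_mulgK.
Qed.

Lemma fgword_ind (P : fgword L -> Prop) :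
  P (fg_one L) ->
  (forall l u, P u -> P (fg_mul (fg_gen l) u)) ->
  (forall l u, P u -> P (fg_mul (fg_inv (fg_gen l)) u)) ->
  forall u, P u.
Proof.
move=> P1 Pgen Pinv [s Hs]; elim: s Hs => [|[l b] s IH] Hs.
  by rewrite (_ : FGW Hs = fg_one L) //; apply: val_inj.
have Hl : reduced [:: (l, b)] by [].
rewrite (_ : FGW Hs = fg_mul (FGW Hl) (FGW (reduced_behead Hs))); last first.
  by apply: val_inj; rewrite /= push_reduced_cons.
move: (FGW _) (IH (reduced_behead Hs)) => u Pu.
case: b Hl {Hs} => Hl.
  by rewrite (_ : FGW Hl = fg_gen l); [exact: Pgen | apply: val_inj].
by rewrite (_ : FGW Hl = fg_inv (fg_gen l)); [exact: Pinv | apply: val_inj].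
Qed.

End FreeGroupLaws.

Section FreeGroupHom.
Variables L L' : finType.
Variable f : fgword L -> fgword L'.
Hypothesis f_hom : is_ghom f.

Lemma ghom1 : f (fg_one L) = fg_one L'.
Proof.
have f11 : fg_mul (f (fg_one L)) (f (fg_one L)) = f (fg_one L).
  by rewrite -f_hom fg_mul1g.
by rewrite -[LHS]fg_mul1g -(fg_mulVg (f (fg_one L))) fg_mulA f11.
Qed.

Lemma ghomV u : f (fg_inv u) = fg_inv (f u).
Proof.
have fVf : fg_mul (f (fg_inv u)) (f u) = fg_one L'.
  by rewrite -f_hom fg_mulVg ghom1.
by rewrite -[LHS]fg_mulg1 -(fg_mulgV (f u)) -fg_mulA fVf fg_mul1g.
Qed.

End FreeGroupHom.

Lemma ghom_const1 (L L' : finType) : is_ghom (fun _ : fgword L => fg_one L').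
Proof. by move=> u v; rewrite fg_mul1g. Qed.

Lemma ghom_ext (L L' : finType) (f g : fgword L -> fgword L') :
  is_ghom f -> is_ghom g -> (forall l, f (fg_gen l) = g (fg_gen l)) -> f =1 g.
Proof.
move=> f_hom g_hom fg; apply: fgword_ind => [|l u IH|l u IH].
- by rewrite (ghom1 f_hom) (ghom1 g_hom).
- by rewrite f_hom g_hom fg IH.
- by rewrite f_hom g_hom (ghomV f_hom) (ghomV g_hom) fg IH.
Qed.

Section ExponentSum.
Variable L : finType.

Definition letter_sign (a : letter L) : int := if a.2 then 1 else -1.
Definition word_deg (s : seq (letter L)) : int := \sum_(a <- s) letter_sign a.
Definition fg_deg (u : fgword L) : int := word_deg u.

Lemma word_deg_cons a s : word_deg (a :: s) = letter_sign a + word_deg s.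
Proof. by rewrite /word_deg big_cons. Qed.

Lemma word_deg_push a s : word_deg (push a s) = letter_sign a + word_deg s.
Proof.
case: s => [|b s] /=; first by rewrite word_deg_cons.
case: eqP => [->|_]; last by rewrite word_deg_cons.
rewrite word_deg_cons addrA /letter_sign /inv_letter /=.
by case: a.2; rewrite ?addrN ?addNr add0r.
Qed.

Lemma word_deg_foldr_push s t :
  word_deg (foldr (@push L) t s) = word_deg s + word_deg t.
Proof.
elim: s => [|a s IH] /=; first by rewrite /word_deg big_nil add0r.
by rewrite word_deg_push IH word_deg_cons addrA.
Qed.

Lemma fg_degM u v : fg_deg (fg_mul u v) = fg_deg u + fg_deg v.
Proof. exact: word_deg_foldr_push. Qed.

Lemma fg_deg1 : fg_deg (fg_one L) = 0.
Proof. by rewrite /fg_deg /word_deg big_nil. Qed.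

Lemma fg_deg_gen l : fg_deg (fg_gen l) = 1.
Proof. by rewrite /fg_deg /= word_deg_cons /word_deg big_nil addr0. Qed.

Lemma fg_degV u : fg_deg (fg_inv u) = - fg_deg u.
Proof. by apply/eqP; rewrite -addr_eq0 -fg_degM fg_mulVg fg_deg1. Qed.

End ExponentSum.

Section InfiniteCyclic.
Variables (L : finType) (l0 : L).
Hypothesis one_letter : forall l : L, l = l0.
Local Notation xg := (fg_gen l0).

Lemma reduced_nseq s : reduced s -> exists b, s = nseq (size s) (l0, b).
Proof.
elim: s => [|[l b] s IH] Hs; first by exists true.
have [c Hc] := IH (reduced_behead Hs).
exists b; rewrite /= (one_letter l); congr cons.
case: s Hs Hc {IH} => [|d s] //= /andP[Hd _] Hc; rewrite Hc.
suff -> : c = b by [].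
case: Hc Hd => -> _; rewrite /inv_letter (one_letter l) xpair_eqE eqxx /=.
by case: b; case: c.
Qed.

Lemma word_deg_nseq n b :
  word_deg (nseq n (l0, b)) = if b then n%:Z else - n%:Z.
Proof.
elim: n => [|n IH]; first by rewrite /word_deg big_nil; case: b.
by rewrite /= word_deg_cons IH /letter_sign; case: (b); rewrite // intS opprD.
Qed.

Lemma fg_deg_inj : injective (@fg_deg L).
Proof.
case=> s Hs [t Ht]; rewrite /fg_deg /= => Hd; apply: val_inj => /=.
have [b Hb] := reduced_nseq Hs; have [c Hc] := reduced_nseq Ht.
move: Hd; rewrite Hb Hc !word_deg_nseq.
case: b c {Hb Hc} => [] [] /= Hd.
- by congr nseq; lia.
- by have [-> ->] : size s = 0%N /\ size t = 0%N by lia.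
- by have [-> ->] : size s = 0%N /\ size t = 0%N by lia.
- by congr nseq; lia.
Qed.

Lemma xg_commute u : fg_mul xg u = fg_mul u xg.
Proof. by apply: fg_deg_inj; rewrite !fg_degM addrC. Qed.

Lemma ghom_ext_xg (f g : fgword L -> fgword L) : is_ghom f -> is_ghom g ->
  f xg = g xg -> f =1 g.
Proof. by move=> f_hom g_hom fg; apply: ghom_ext => // l; rewrite (one_letter l). Qed.

Lemma ghom_fg_deg (g : fgword L -> fgword L) : is_ghom g ->
  forall u, fg_deg (g u) = fg_deg u * fg_deg (g xg).
Proof.
move=> g_hom; apply: fgword_ind => [|l u IH|l u IH].
- by rewrite (ghom1 g_hom) fg_deg1 mul0r.
- by rewrite (one_letter l) g_hom !fg_degM IH fg_deg_gen mulrDl mul1r.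
- rewrite (one_letter l) g_hom !fg_degM IH (ghomV g_hom) !fg_degV fg_deg_gen.
  by rewrite mulrDl mulN1r.
Qed.

(* [g x = x^k] with [k^2 = k] *)
Lemma ghom_idem_xg (g : fgword L -> fgword L) : is_ghom g ->
  g (g xg) = g xg -> g xg = fg_one L \/ g xg = xg.
Proof.
move=> g_hom ggx; have := ghom_fg_deg g_hom (g xg); rewrite ggx => /eqP.
rewrite -{1}[fg_deg (g xg)]mulr1 eq_sym -subr_eq0 -mulrBr mulf_eq0 subr_eq0.
by case/orP=> /eqP k_eq; [left | right];
  apply: fg_deg_inj; rewrite k_eq ?fg_deg1 ?fg_deg_gen.
Qed.

End InfiniteCyclic.

Section FreeModule.
Variables (R : comNzRingType) (Y L : finType).
Local Notation fm := (@fmod R Y L).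
Local Notation fm0 := (fm_zero R Y L).
Implicit Types (a b : fm).

Lemma fm_zeroE k : fm0 k = 0.
Proof. by rewrite /fm_zero fsfun_fun. Qed.

Lemma fm_addE a b k : fm_add a b k = a k + b k.
Proof.
rewrite /fm_add fsfun_fun; case: ifP => //.
rewrite in_fsetU => /negbT; rewrite negb_or => /andP[Ha Hb].
by rewrite !fsfun_dflt // addr0.
Qed.

Lemma fm_scaleE r a k : fm_scale r a k = r * a k.
Proof.
rewrite /fm_scale fsfun_fun; case: ifP => // /negbT Ha.
by rewrite fsfun_dflt // mulr0.
Qed.

Lemma fm_actE a g k : fm_act a g k = a (k.1, fg_mul k.2 (fg_inv g)).
Proof.
rewrite /fm_act fsfun_fun; case: ifP => // /negbT Hk.
apply/esym/fsfun_dflt; apply: contra Hk => k_supp.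
apply/imfsetP; exists (k.1, fg_mul k.2 (fg_inv g)) => //=.
by rewrite fg_mulgKV -surjective_pairing.
Qed.

Lemma fm_basisE (y : Y) k :
  fm_basis R L y k = if k == (y, fg_one L) then 1 else 0.
Proof. by rewrite /fm_basis fsfun_fun in_fset1. Qed.

Lemma fm_ext a b : a =1 b -> a = b.
Proof. by move=> H; apply/fsfunP. Qed.

Lemma fm_addr0 a : fm_add a fm0 = a.
Proof. by apply: fm_ext => k; rewrite fm_addE fm_zeroE addr0. Qed.

Lemma fm_scale0r a : fm_scale 0 a = fm0.
Proof. by apply: fm_ext => k; rewrite fm_scaleE fm_zeroE mul0r. Qed.

Lemma fm_scaler0 r : fm_scale r fm0 = fm0.
Proof. by apply: fm_ext => k; rewrite fm_scaleE fm_zeroE mulr0. Qed.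

Lemma fm_actM a g h : fm_act (fm_act a g) h = fm_act a (fg_mul g h).
Proof. by apply: fm_ext => k; rewrite !fm_actE /= fg_invMg fg_mulA. Qed.

Lemma fm_act1 a : fm_act a (fg_one L) = a.
Proof. by apply: fm_ext => -[y u]; rewrite fm_actE fg_invg1 fg_mulg1. Qed.

Lemma fm_actD a b g : fm_act (fm_add a b) g = fm_add (fm_act a g) (fm_act b g).
Proof. by apply: fm_ext => k; rewrite !(fm_actE, fm_addE). Qed.

Lemma fm_actZ r a g : fm_act (fm_scale r a) g = fm_scale r (fm_act a g).
Proof. by apply: fm_ext => k; rewrite !(fm_actE, fm_scaleE). Qed.

Lemma fm_act0 g : fm_act fm0 g = fm0.
Proof. by apply: fm_ext => k; rewrite fm_actE !fm_zeroE. Qed.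

Lemma fm_act_basisE (y : Y) g k :
  fm_act (fm_basis R L y) g k = if k == (y, g) then 1 else 0.
Proof.
case: k => y' u; rewrite fm_actE fm_basisE /= !xpair_eqE.
suff -> : (fg_mul u (fg_inv g) == fg_one L) = (u == g) by [].
apply/eqP/eqP => [|->]; last exact: fg_mulgV.
by move=> /(congr1 (fun v => fg_mul v g)); rewrite fg_mulgKV fg_mul1g.
Qed.

End FreeModule.

Section FreeModuleHom.
Variables (R : comNzRingType) (Y L Y' L' : finType).
Variables (f : @fmod R Y L -> @fmod R Y' L') (phi : fgword L -> fgword L').
Hypothesis f_add : forall a b, f (fm_add a b) = fm_add (f a) (f b).
Hypothesis f_scale : forall r a, f (fm_scale r a) = fm_scale r (f a).
Hypothesis f_act : forall a g, f (fm_act a g) = fm_act (f a) (phi g).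

Lemma fm_hom0 : f (fm_zero R Y L) = fm_zero R Y' L'.
Proof. by rewrite -(fm_scale0r (fm_zero R Y L)) f_scale fm_scale0r. Qed.

(* Induction on the support: peel off the term [b k . (k.1 . k.2)]. *)
Lemma fm_hom_eq0 : (forall y, f (fm_basis R L y) = fm_zero R Y' L') ->
  forall b, f b = fm_zero R Y' L'.
Proof.
move=> f_basis b; move: {2}#|` finsupp b| (leqnn #|` finsupp b|) => n.
elim: n b => [|n IH] b Hn.
  suff -> : b = fm_zero R Y L by exact: fm_hom0.
  have /cardfs0_eq supp0 : #|` finsupp b| = 0%N by lia.
  by apply: fm_ext => k; rewrite fm_zeroE fsfun_dflt // supp0.
have [supp0|[k Hk]] := fset_0Vmem (finsupp b).
  by apply: IH; rewrite supp0 cardfs0.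
pose d := fm_act (fm_basis R L k.1) k.2.
have dE j : d j = if j == k then 1 else 0 by rewrite fm_act_basisE -surjective_pairing.
pose b' := fm_add b (fm_scale (- b k) d).
have b_split : b = fm_add (fm_scale (b k) d) b'.
  apply: fm_ext => j; rewrite !(fm_addE, fm_scaleE) dE.
  by case: eqP => [->|_]; rewrite ?mulr1 ?subrr ?mulr0 ?oppr0 ?add0r addr0.
have supp_b' : finsupp b' `<=` finsupp b `\ k.
  apply/fsubsetP => j; rewrite in_fsetD1 !mem_finsupp fm_addE fm_scaleE dE.
  by case: (eqVneq j k) => [->|_]; rewrite ?mulr1 ?subrr ?eqxx // mulr0 addr0.
rewrite b_split f_add f_scale f_act f_basis fm_act0 fm_scaler0 IH ?fm_addr0 //.
have := fsubset_leq_card supp_b'; have := cardfsD1 k (finsupp b).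
rewrite Hk add1n => card_b /leq_trans; apply.
by rewrite -ltnS -card_b.
Qed.

End FreeModuleHom.

(* A shift-invariant element is constant along [k.2 x^n], whose degrees are
   unbounded, whereas the support is finite. *)
Lemma fm_act_gen_fixed (R : comNzRingType) (Y L : finType) (l0 : L)
  (b : @fmod R Y L) :
  fm_act b (fg_gen l0) = b -> b = fm_zero R Y L.
Proof.
move=> bx; apply: fm_ext => k; rewrite fm_zeroE.
pose xpow n := iter n (fun u => fg_mul u (fg_gen l0)) k.2.
have b_xpow n : b (k.1, xpow n) = b k.
  elim: n => [|n IH] /=; first by rewrite -surjective_pairing.
  by rewrite -IH -{1}bx fm_actE /= fg_mulgK.
have deg_xpow n : fg_deg (xpow n) = fg_deg k.2 + n%:Z.
  elim: n => [|n IH] /=; first by rewrite addr0.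
  by rewrite fg_degM IH fg_deg_gen -addn1 PoszD addrA.
apply/eqP/negPn/negP => bk.
pose M := (\max_(j <- finsupp b) `|fg_deg j.2|)%N.
have deg_le_M j : j \in finsupp b -> (`|fg_deg j.2| <= M)%N.
  by move=> j_supp; exact: (leq_bigmax_seq j j_supp).
set n := (M + `|fg_deg k.2|).+1.
have /deg_le_M : (k.1, xpow n) \in finsupp b by rewrite mem_finsupp b_xpow.
by rewrite deg_xpow /n; move: (fg_deg k.2) => d; lia.
Qed.

Section MonoidAutomorphismFixes.
Variables (M : Type) (op : M -> M -> M) (z c : M) (psi : M -> M).
Hypothesis opA : forall a b d, op (op a b) d = op a (op b d).
Hypothesis op0m : forall m, op z m = z.
Hypothesis opm0 : forall m, op m z = z.
Hypothesis c_idem : op c c = c.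
Hypothesis c_central : forall m, op c m = op m c.
Hypothesis c_neq0 : c <> z.
Hypothesis idem_c : forall f, op f f = f -> op f c = f -> f = z \/ f = c.
Hypothesis central_c_annihilated :
  forall e, (forall m, op e m = op m e) -> op c e = z -> e = z.
Hypothesis psi_bij : bijective psi.
Hypothesis psiM : forall a b, psi (op a b) = op (psi a) (psi b).

Let psi_surj n : exists m, psi m = n.
Proof. by case: psi_bij => g _ psiK; exists (g n); rewrite psiK. Qed.

Lemma aut_fix0 : psi z = z.
Proof. by have [a psi_a] := psi_surj z; rewrite -(opm0 a) psiM psi_a op0m. Qed.

Lemma aut_fix_c : psi c = c.
Proof.
have psi_inj := bij_inj psi_bij.
set d := psi c.
have d_idem : op d d = d by rewrite -psiM c_idem.
have d_neq0 : d <> z by move=> d0; apply/c_neq0/psi_inj; rewrite aut_fix0.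
have idem_d f : op f f = f -> op f d = f -> f = z \/ f = d.
  have [f' <-] := psi_surj f; rewrite -!psiM => /psi_inj ff /psi_inj fc.
  by case: (idem_c ff fc) => ->; [left; exact: aut_fix0 | right].
have d_central m : op d m = op m d.
  by have [m' <-] := psi_surj m; rewrite -!psiM c_central.
have cdc : op (op c d) c = op c d by rewrite opA (d_central c) -opA c_idem.
have cdd : op (op c d) d = op c d by rewrite opA d_idem.
have cd_idem : op (op c d) (op c d) = op c d by rewrite -opA cdc cdd.
case: (idem_c cd_idem cdc) => [cd0|cdc'].
  by case: d_neq0; apply: central_c_annihilated.
case: (idem_d _ cd_idem cdd) => [cd0|<-//].
by case: c_neq0; rewrite -cdc'.
Qed.

End MonoidAutomorphismFixes.

Section MonoidAutomorphismImage.
Variables (M : Type) (op : M -> M -> M) (c : M) (psi : M -> M).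
Hypothesis psi_bij : bijective psi.
Hypothesis psiM : forall a b, psi (op a b) = op (psi a) (psi b).
Hypothesis psi_c : psi c = c.

Lemma image_eq_bij (P : M -> Prop) :
  (forall m, P (psi m) <-> P m) -> image_eq psi P.
Proof.
case: psi_bij => g gK Kg Pinv n; split=> [Pn|[m [Pm <-]]]; last exact/Pinv.
by exists (g n); rewrite Kg; split=> //; apply/Pinv; rewrite Kg.
Qed.

Lemma image_eq_op_c (kappa : M -> M) : (forall m, psi (kappa m) = kappa (psi m)) ->
  image_eq psi (fun m => op c m = kappa m).
Proof.
move=> psi_kappa; apply: image_eq_bij => m.
rewrite -{1}psi_c -psiM -psi_kappa.
by split=> [/(bij_inj psi_bij)|->].
Qed.

End MonoidAutomorphismImage.

Lemma image_eq_iff (T : Type) (f : T -> T) (P Q : T -> Prop) :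
  image_eq f P -> (forall m, Q m <-> P m) -> image_eq f Q.
Proof.
move=> fP QP n; split=> [/QP/fP [m [Pm <-]]|[m [/QP Pm <-]]].
  by exists m; split=> //; apply/QP.
by apply/QP/fP; exists m.
Qed.

Lemma rhom_ext (R : comNzRingType) (Y0 X0 : choiceType) (A B : robj Y0 X0)
  (m m' : rhom R A B) : mu1 m =1 mu1 m' -> mu2 m =1 mu2 m' -> m = m'.
Proof.
case: m m' => f1 f2 f_add f_scale f_hom f_act [f1' f2' ? ? ? ?] /= E1 E2.
move: (functional_extensionality _ _ E1) (functional_extensionality _ _ E2).
by move=> ? ?; subst; f_equal; apply: proof_irrelevance.
Qed.

Lemma rhom_mu1_0 (R : comNzRingType) (Y0 X0 : choiceType) (A B : robj Y0 X0)
  (m : rhom R A B) : mu1 m (fm_zero _ _ _) = fm_zero _ _ _.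
Proof. exact: fm_hom0 (mu1_scale m). Qed.

Lemma eq_rect_hcomp (R : comNzRingType) (Y0 X0 : choiceType) (A B : robj Y0 X0)
  (h : A = B) (f g : rhom R A A) :
  eq_rect A (fun A => rhom R A A) (hcomp f g) B h =
  hcomp (eq_rect A (fun A => rhom R A A) f B h)
        (eq_rect A (fun A => rhom R A A) g B h).
Proof. by case: B / h. Qed.

Lemma eq_rect_bij (R : comNzRingType) (Y0 X0 : choiceType) (A B : robj Y0 X0)
  (h : A = B) : bijective (fun f : rhom R A A => eq_rect A (fun A => rhom R A A) f B h).
Proof. by case: B / h; exists id. Qed.

Lemma restr1_monoid_aut (R : comNzRingType) (Y0 X0 : choiceType) (y : Y0) (x : X0)
  (PO : robj Y0 X0 -> robj Y0 X0)
  (PH : forall A B, rhom R A B -> rhom R (PO A) (PO B))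
  (h1 : PO (O1 y x) = O1 y x) : is_cat_auto PH ->
  bijective (restr1 PH h1) /\
  forall a b, restr1 PH h1 (hcomp a b) = hcomp (restr1 PH h1 a) (restr1 PH h1 b).
Proof.
case=> _ PH_bij _ PH_comp; split; first exact: (bij_comp (eq_rect_bij R h1) (PH_bij _ _)).
by move=> a b; rewrite /restr1 PH_comp eq_rect_hcomp.
Qed.

Section End1Monoid.
Variables (R : comNzRingType) (Y0 X0 : choiceType) (y : Y0) (x : X0).
Local Notation O := (O1 y x).
Local Notation E := (End1 R y x).
Local Notation comp := (@hcomp R Y0 X0 O O O).
Local Notation lx := ([` fset11 x] : [fset x]).
Local Notation fm0 := (fm_zero R [fset y] [fset x]).

Lemma O1_one_letter (l : [fset x]) : l = lx.
Proof. by case: l => l Hl; apply: val_inj => /=; apply/fset1P. Qed.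

Lemma O1_one_generator (l : [fset y]) : l = [` fset11 y].
Proof. by case: l => l Hl; apply: val_inj => /=; apply/fset1P. Qed.

Definition nu_0e : E.
Proof.
refine (@Defs.Hom R _ _ O O (fun _ => fm0) (fun _ => fg_one _) _ _ _ _).
- by move=> a b; rewrite fm_addr0.
- by move=> r a; rewrite fm_scaler0.
- by move=> u v; rewrite fg_mul1g.
- by move=> a g; rewrite fm_act0.
Defined.

Definition nu_0x : E.
Proof.
refine (@Defs.Hom R _ _ O O (fun _ => fm0) id _ _ _ _).
- by move=> a b; rewrite fm_addr0.
- by move=> r a; rewrite fm_scaler0.
- by [].
- by move=> a g; rewrite fm_act0.
Defined.

(* nu_(x,x), i.e. a |-> a.x *)
Definition shift_x : E.
Proof.
refine (@Defs.Hom R _ _ O O (fun a => fm_act a (x1 y x)) id _ _ _ _).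
- by move=> a b; rewrite fm_actD.
- by move=> r a; rewrite fm_actZ.
- by [].
- by move=> a g /=; rewrite !fm_actM (xg_commute O1_one_letter).
Defined.

Lemma End1_compA (a b d : E) : comp (comp a b) d = comp a (comp b d).
Proof. exact: rhom_ext. Qed.

Lemma comp_nu_0e_l (m : E) : comp nu_0e m = nu_0e.
Proof. exact: rhom_ext. Qed.

Lemma comp_nu_0e_r (m : E) : comp m nu_0e = nu_0e.
Proof. by apply: rhom_ext => a /=; rewrite ?rhom_mu1_0 ?(ghom1 (mu2_ghom m)). Qed.

Lemma nu_0x_idem : comp nu_0x nu_0x = nu_0x.
Proof. exact: rhom_ext. Qed.

Lemma nu_0x_central (m : E) : comp nu_0x m = comp m nu_0x.
Proof. by apply: rhom_ext => a /=; rewrite ?rhom_mu1_0. Qed.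

Lemma nu_0x_neq0 : nu_0x <> nu_0e.
Proof. by move=> /(congr1 (fun m : E => val (mu2 m (x1 y x)))). Qed.

Lemma idem_comp_nu_0x (f : E) :
  comp f f = f -> comp f nu_0x = f -> f = nu_0e \/ f = nu_0x.
Proof.
move=> ff fc.
have f1_0 a : mu1 f a = fm0 by rewrite -fc /= rhom_mu1_0.
have := congr1 (fun m : E => mu2 m (x1 y x)) ff => /= f2_idem.
case: (ghom_idem_xg O1_one_letter (mu2_ghom f) f2_idem) => f2x; [left|right].
  apply: rhom_ext => // u.
  exact: (ghom_ext_xg O1_one_letter (mu2_ghom f) (@ghom_const1 _ _)).
by apply: rhom_ext => // u; apply: (ghom_ext_xg O1_one_letter (mu2_ghom f)).
Qed.

Lemma central_annihilated_nu_0x (e : E) :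
  (forall m, comp e m = comp m e) -> comp nu_0x e = nu_0e -> e = nu_0e.
Proof.
move=> e_central ce0.
have e2_1 u : mu2 e u = fg_one _ by have := congr1 (fun m : E => mu2 m u) ce0.
apply: rhom_ext => // a /=; apply: (@fm_act_gen_fixed _ _ _ lx).
change (fm_act (mu1 e a) (x1 y x) = mu1 e a).
have /= <- := congr1 (fun m : E => mu1 m a) (e_central shift_x).
by rewrite mu_act e2_1 fm_act1.
Qed.

Lemma mu1_one1_eq0 (m : E) : mu1 m (one1 R y x) = fm0 -> forall a, mu1 m a = fm0.
Proof.
move=> m1; apply: fm_hom_eq0 (mu1_add m) (mu1_scale m) (mu_act m) _ => l.
by rewrite (O1_one_generator l).
Qed.

Lemma T_e_iff (m : E) : T_e m <-> comp nu_0x m = nu_0e.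
Proof.
split=> [[w [_ m2x]]|/(congr1 (fun m : E => mu2 m (x1 y x))) m2x].
  apply: rhom_ext => // u.
  exact: (ghom_ext_xg O1_one_letter (mu2_ghom m) (@ghom_const1 _ _)).
by exists (mu1 m (one1 R y x)).
Qed.

Lemma T_x_iff (m : E) : T_x m <-> comp nu_0x m = nu_0x.
Proof.
split=> [[w [_ m2x]]|/(congr1 (fun m : E => mu2 m (x1 y x))) m2x].
  by apply: rhom_ext => // u; apply: (ghom_ext_xg O1_one_letter (mu2_ghom m)).
by exists (mu1 m (one1 R y x)).
Qed.

Lemma T_0_iff (m : E) : T_0 m <-> comp nu_0x m = m.
Proof.
split=> [[g [m1 _]]|<-]; last by exists (mu2 m (x1 y x)).
by apply: rhom_ext => // a /=; rewrite mu1_one1_eq0.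
Qed.

Lemma is_nu_0x (m : E) : is_nu (zero1 R y x) (x1 y x) m -> m = nu_0x.
Proof.
case=> m1 m2x; apply: rhom_ext => [a|u] /=; first by rewrite mu1_one1_eq0.
exact: (ghom_ext_xg O1_one_letter (mu2_ghom m)).
Qed.

Lemma End1_aut_fix (psi : E -> E) : bijective psi ->
  (forall a b, psi (comp a b) = comp (psi a) (psi b)) ->
  psi nu_0e = nu_0e /\ psi nu_0x = nu_0x.
Proof.
move=> psi_bij psiM; split; first exact: aut_fix0 comp_nu_0e_l comp_nu_0e_r psi_bij psiM.
exact: aut_fix_c End1_compA comp_nu_0e_l comp_nu_0e_r nu_0x_idem nu_0x_central
  nu_0x_neq0 idem_comp_nu_0x central_annihilated_nu_0x psi_bij psiM.
Qed.

End End1Monoid.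

Theorem mainTheorem15 (R : comNzRingType) (Y0 X0 : choiceType)
  (Y0_inf : infinite_type Y0) (X0_inf : infinite_type X0)
  (y : Y0) (x : X0)
  (PO : robj Y0 X0 -> robj Y0 X0)
  (PH : forall A B, rhom R A B -> rhom R (PO A) (PO B))
  (HPhi : is_cat_auto PH)
  (h1 : PO (O1 y x) = O1 y x) :
  image_eq (restr1 PH h1) (@T_e R Y0 X0 y x) /\
  image_eq (restr1 PH h1) (@T_0 R Y0 X0 y x) /\
  image_eq (restr1 PH h1) (@T_x R Y0 X0 y x) /\
  (forall m : End1 R y x, is_nu (zero1 R y x) (x1 y x) m ->
     restr1 PH h1 m = m).
Proof.
have [psi_bij psiM] := restr1_monoid_aut h1 HPhi.
have [psi_0e psi_0x] := End1_aut_fix psi_bij psiM.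
split; [|split; [|split]].
- exact: image_eq_iff (image_eq_op_c psi_bij psiM psi_0x (fun=> psi_0e))
    (T_e_iff (x := x)).
- exact: image_eq_iff (image_eq_op_c psi_bij psiM psi_0x (kappa := id) (fun=> erefl))
    (T_0_iff (x := x)).
- exact: image_eq_iff (image_eq_op_c psi_bij psiM psi_0x (fun=> psi_0x))
    (T_x_iff (x := x)).
- by move=> m /is_nu_0x ->.
Qed.
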